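(* Let $A\in gl(n,\mathbb{C})$ be nilpotent of index $m\ge2$ (i.e. $A^m=0\ne A^{m-1}$), let $L:\mathbb{C}^n\to\mathbb{C}^n$ be the linear map it represents, $K_j=\ker L^j$ for $j=0,\dots,m$, $K_{-1}=\{0\}$, $U_j=K_j\cap K_{j-1}^{\perp}$ and $r_j=\dim U_j$ for $j=1,\dots,m$. Then for every $j\in\{1,\dots,m\}$ there exists an orthonormal basis $\{u^j_1,\dots,u^j_{r_j}\}$ of $U_j$ such that for all $j\ge2$ and all $k\in\{1,\dots,r_j\}$, $$Lu^j_k\in\mathrm{Span}(u^{j-1}_1,\dots,u^{j-1}_k)\oplus^\perp K_{j-2}\quad\text{and}\quad\langle Lu^j_k,u^{j-1}_k\rangle\ne0.$$
   Context: $\mathbb{C}^n$ carries the standard Hermitian inner product $\langle\cdot,\cdot\rangle$; $\perp$ denotes orthogonal complement and $\oplus^\perp$ an orthogonal direct sum. *)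

(* C^n is modelled by row vectors 'rV[Cplx]_n, where
   Cplx := R[i] is the complex numbers built (mathcomp-real-closed) over
   Stdlib's real numbers R (an rcfType via Rstruct). *)
From HB Require Import structures.
From mathcomp Require Import all_boot all_order all_algebra.
From mathcomp Require Import sesquilinear spectral.
From mathcomp.real_closed Require Import complex.
From mathcomp Require Import Rstruct.
Set Implicit Arguments. Unset Strict Implicit. Unset Printing Implicit Defensive.
Import Order.TTheory GRing.Theory Num.Theory Num.Def.
Local Open Scope ring_scope.

Definition Cplx : numClosedFieldType := (Rdefinitions.R)[i].

(* Standard Hermitian inner product <u, v> = \sum_i u_i * conj (v_i). *)
Definition hdot n (u v : 'rV[Cplx]_n) : Cplx := dotmx u v.

(* Orthogonal complement (w.r.t. hdot) of the row space of B. *)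
Definition horth m n (B : 'M[Cplx]_(m, n)) : 'M[Cplx]_n :=
  orthomx conjC (mx_of_hermitian (hermitian1mx _)) B.

(* The linear map L represented by A : L x = A x for a column vector x;
   on the row vector u = x^T this is (A x)^T = u *m A^T. *)
Definition Lmap n (A : 'M[Cplx]_n) (u : 'rV[Cplx]_n) : 'rV[Cplx]_n :=
  u *m A^T.

(* K_j = ker L^j, as a row space: {u | (A^j u^T)^T = u *m (A^j)^T = 0}. *)
Definition Kspace n (A : 'M[Cplx]_n) (j : nat) : 'M[Cplx]_n :=
  kermx ((A ^+ j)^T).

(* U_j = K_j \cap K_{j-1}^perp  (used for j >= 1). *)
Definition Uspace n (A : 'M[Cplx]_n) (j : nat) : 'M[Cplx]_n :=
  (Kspace A j :&: horth (Kspace A j.-1))%MS.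

Definition spanfam n (v : nat -> 'rV[Cplx]_n) (k : nat) : 'M[Cplx]_n :=
  (\sum_(i < k) <<v i>>)%MS.

From mathcomp Require Import all_boot all_order all_algebra.
From mathcomp Require Import sesquilinear spectral.
From mathcomp Require Import zify.
Import GRing.Theory.
Local Open Scope ring_scope.

(* The bases are built from [j = m] downwards. Given an orthonormal basis [f]
   of [U_(j+2)], let [P] be the orthogonal projection onto [K_j^perp] and
   [w_k := P (L f_k)]. Since [L] maps [K_(j+2)] into [K_(j+1)], each [w_k]
   lies in [U_(j+1)]; since [x |-> P (L x)] is injective on [K_(j+1)^perp],
   the [w_k] are linearly independent. Completing them to a basis of
   [U_(j+1)] and applying Gram-Schmidt yields an orthonormal basis [g] with
   [w_k] in [Span(g_0, ..., g_k)], and [<w_k, g_k> <> 0] since otherwise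
   [w_0, ..., w_k] would all lie in [Span(g_0, ..., g_(k-1))]. Finally
   [L f_k - w_k] lies in [K_j], which is orthogonal to every [g_l]. *)

Section Orthogonality.
Local Set Implicit Arguments.
Local Unset Strict Implicit.
Variable n : nat.
Implicit Types u v x y : 'rV[Cplx]_n.

Lemma sub_horth_hdot u v : (u <= horth v)%MS = (hdot u v == 0).
Proof.
rewrite /horth orthomx1E /hdot dotmxE.
apply/eqP/eqP => [->|uv0]; first by rewrite mxE.
by apply/matrixP => i j; rewrite !ord1 uv0 mxE.
Qed.

Lemma hdotDl x y v : hdot (x + y) v = hdot x v + hdot y v.
Proof. exact: linearDl. Qed.

Lemma hdotZl a x v : hdot (a *: x) v = a * hdot x v.
Proof. exact: linearZl_LR. Qed.

Lemma horth_sym p q (X : 'M[Cplx]_(p, n)) (Y : 'M[Cplx]_(q, n)) :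
  (X <= horth Y)%MS = (Y <= horth X)%MS.
Proof. exact: orthomx_sym. Qed.

Lemma hdot_horth p (K : 'M[Cplx]_(p, n)) u v :
  (u <= K)%MS -> (v <= horth K)%MS -> hdot u v = 0.
Proof.
move=> uK vK; apply/eqP; rewrite -sub_horth_hdot.
by apply: submx_trans uK _; rewrite horth_sym.
Qed.

Lemma proj_horth_compl_sub p (K : 'M[Cplx]_(p, n)) y :
  (y - y *m proj_ortho (horth K) <= K)%MS.
Proof. by have := proj_ortho_compl_sub (horth K) y; rewrite /horth ortho_id. Qed.

Lemma adds_capmx_horth p q (W : 'M[Cplx]_(p, n)) (V : 'M[Cplx]_(q, n)) :
  (W <= V)%MS -> (W + (V :&: horth W) :=: V)%MS.
Proof.
move=> WV; rewrite capmxC; apply: eqmx_trans (matrix_modl _ WV) (capTmx _ _).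
by rewrite /row_full (addsmx_ortho W) mxrank1.
Qed.

End Orthogonality.

Section Families.
Local Set Implicit Arguments.
Local Unset Strict Implicit.
Variable n : nat.
Implicit Types (w v : nat -> 'rV[Cplx]_n) (x : 'rV[Cplx]_n).

Definition spanfam_free w r := forall k, (k < r)%N -> ~~ (w k <= spanfam w k)%MS.

Definition orthonormal w r :=
  forall k l, (k < r)%N -> (l < r)%N -> hdot (w k) (w l) = (k == l)%:R.

Definition onbasis (V : 'M[Cplx]_n) w :=
  let r := \rank V in
  (forall k, (k < r)%N -> (w k <= V)%MS) /\ (V <= spanfam w r)%MS /\ orthonormal w r.

Lemma spanfam_recr w k : spanfam w k.+1 = (spanfam w k + <<w k>>)%MS.
Proof. by rewrite /spanfam big_ord_recr. Qed.

Lemma spanfam_sup w k i : (i < k)%N -> (w i <= spanfam w k)%MS.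
Proof. by move=> ik; apply: (sumsmx_sup (Ordinal ik)) => //; rewrite genmxE. Qed.

Lemma spanfam_sub p w k (M : 'M[Cplx]_(p, n)) :
  (forall i, (i < k)%N -> (w i <= M)%MS) -> (spanfam w k <= M)%MS.
Proof. by move=> wM; apply/sumsmx_subP => i _; rewrite genmxE wM. Qed.

Lemma spanfamS w i k : (i <= k)%N -> (spanfam w i <= spanfam w k)%MS.
Proof. by move=> ik; apply: spanfam_sub => l li; apply: spanfam_sup (leq_trans li ik). Qed.

Lemma spanfam_mulmx w k (F : 'M[Cplx]_n) :
  (spanfam (fun i => w i *m F) k <= spanfam w k *m F)%MS.
Proof. by apply: spanfam_sub => i ik; rewrite submxMr ?spanfam_sup. Qed.

Lemma mxrank_spanfam_leq w k : (\rank (spanfam w k) <= k)%N.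
Proof.
elim: k => [|k IHk]; first by rewrite /spanfam big_ord0 mxrank0.
rewrite spanfam_recr; apply: leq_trans (mxrank_adds_leqif _ _) _.
by rewrite genmxE -[k.+1]addn1 leq_add ?rank_leq_row.
Qed.

Lemma mxrank_spanfam_free w r : spanfam_free w r -> \rank (spanfam w r) = r.
Proof.
elim: r => [|r IHr] wfree; first by rewrite /spanfam big_ord0 mxrank0.
have rankr : \rank (spanfam w r) = r by apply: IHr => k kr; apply: wfree; apply: ltnW.
apply/eqP; rewrite eqn_leq mxrank_spanfam_leq -{1}rankr spanfam_recr.
have [le_rank eq_rank] := mxrank_leqif_sup (addsmxSl (spanfam w r) <<w r>>%MS).
rewrite ltn_neqAle le_rank andbT eq_rank.
by apply: contra (wfree r (ltnSn r)); apply: submx_trans; rewrite -genmxE addsmxSr.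
Qed.

Lemma orthonormal_horth w r k :
  orthonormal w r -> (k < r)%N -> (w k <= horth (spanfam w k))%MS.
Proof.
move=> wON kr; rewrite horth_sym; apply: spanfam_sub => l lk.
by rewrite sub_horth_hdot wON ?(ltn_trans lk kr) // (ltn_eqF lk).
Qed.

Lemma orthonormal_free w r : orthonormal w r -> spanfam_free w r.
Proof.
move=> wON k kr; apply/negP => wk_span.
have := hdot_horth wk_span (orthonormal_horth wON kr).
by rewrite wON // eqxx => /eqP; rewrite oner_eq0.
Qed.

Lemma spanfam_free_mulmx (V : 'M[Cplx]_n) (F : 'M[Cplx]_n) w r :
  (forall x, (x <= V)%MS -> x *m F = 0 -> x = 0) ->
  (forall k, (k < r)%N -> (w k <= V)%MS) ->
  spanfam_free w r -> spanfam_free (fun k => w k *m F) r.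
Proof.
move=> Finj wV wfree k kr; apply: contra (wfree k kr).
move=> /submx_trans/(_ (spanfam_mulmx w k F)).
case/submxP => D wkF; set y := D *m spanfam w k in wkF.
have yV : (y <= V)%MS.
  by apply: submx_trans (submxMl _ _) _; apply: spanfam_sub => i ik; apply/wV/(ltn_trans ik).
have : w k - y = 0.
  apply: Finj; first by rewrite addmx_sub ?eqmx_opp ?wV.
  by rewrite mulmxBl wkF mulmxA subrr.
by move/subr0_eq->; rewrite submxMl.
Qed.

Lemma orthonormal_spanfam_recr w r k x :
  orthonormal w r -> (k < r)%N -> (x <= spanfam w k.+1)%MS -> hdot x (w k) = 0 ->
  (x <= spanfam w k)%MS.
Proof.
move=> wON kr; rewrite spanfam_recr => /sub_addsmxP[[y z] /= ->].
have /sub_rVP[a ->] : (z *m <<w k>> <= w k)%MS by rewrite (submx_trans (submxMl _ _)) ?genmxE.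
rewrite hdotDl hdotZl (hdot_horth (submxMl y _) (orthonormal_horth wON kr)).
by rewrite wON // eqxx mulr1 add0r => ->; rewrite scale0r addr0 submxMl.
Qed.

Lemma spanfam_free_triangular w v r k :
  spanfam_free w r -> (forall i, (i < r)%N -> (w i <= spanfam v i.+1)%MS) ->
  (k < r)%N -> ~~ (w k <= spanfam v k)%MS.
Proof.
move=> wfree wv kr; apply/negP => wk_span.
have : (spanfam w k.+1 <= spanfam v k)%MS.
  apply: spanfam_sub => i; rewrite ltnS leq_eqVlt => /predU1P[-> //|ik].
  exact: submx_trans (wv i (ltn_trans ik kr)) (spanfamS _ ik).
move/mxrankS; rewrite mxrank_spanfam_free => [|i ik]; last exact/wfree/(leq_trans ik).
by move/leq_trans/(_ (mxrank_spanfam_leq v k)); rewrite ltnn.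
Qed.

Definition rowfam p (M : 'M[Cplx]_(p, n)) k :=
  if @insub _ (fun k => k < p)%N 'I_p k is Some i then row i M else 0.

Lemma rowfamE p (M : 'M[Cplx]_(p, n)) (i : 'I_p) : rowfam M i = row i M.
Proof. by rewrite /rowfam valK. Qed.

Lemma eqmx_spanfam_rowfam p (M : 'M[Cplx]_(p, n)) : (spanfam (rowfam M) p :=: M)%MS.
Proof.
apply/eqmxP/andP; split.
  by apply: spanfam_sub => i ip; rewrite -[i]/(val (Ordinal ip)) rowfamE row_sub.
by apply/row_subP => i; rewrite -rowfamE spanfam_sup.
Qed.

Lemma orthonormal_rowfam p (M : 'M[Cplx]_(p, n)) :
  M \is unitarymx -> orthonormal (rowfam M) p.
Proof.
move=> /row_unitarymxP Mu k l kp lp.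
by rewrite -[k]/(val (Ordinal kp)) -[l]/(val (Ordinal lp)) !rowfamE [hdot _ _]Mu.
Qed.

Lemma row_schmidt_spanfam p (M : 'M[Cplx]_(p, n)) (i : 'I_p) :
  (row i M <= spanfam (rowfam (schmidt M)) i.+1)%MS.
Proof.
apply: submx_trans (row_schmidt_sub M i) _; apply/sumsmx_subP => k ki.
by rewrite genmxE -rowfamE spanfam_sup.
Qed.

Lemma eqmx_matrix_spanfam w r : (\matrix_(i < r) w i :=: spanfam w r)%MS.
Proof.
apply/eqmxP/andP; split; first by apply/row_subP => i; rewrite rowK spanfam_sup.
by apply: spanfam_sub => i ir; rewrite -[w i](rowK (fun i : 'I_r => w i) (Ordinal ir)) row_sub.
Qed.

Lemma row_free_col_mx_horth p (W : 'M[Cplx]_(p, n)) (V : 'M[Cplx]_n) :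
  row_free W -> (W <= V)%MS ->
  let M := col_mx W (row_base (V :&: horth W)%MS) in row_free M /\ (M :=: V)%MS.
Proof.
move=> Wfree WV M.
have eqMV : (M :=: V)%MS.
  apply: eqmx_trans (eqmx_sym (addsmxE _ _)) _.
  exact: eqmx_trans (adds_eqmx (eqmx_refl W) (eq_row_base _)) (adds_capmx_horth WV).
split=> //; rewrite /row_free /M -addsmxE mxrank_disjoint_sum.
  by rewrite (eqP Wfree) eq_row_base.
apply/eqP; rewrite -submx0 -(orthomx_ortho_disj W) capmxS //.
by rewrite eq_row_base capmxSr.
Qed.

Lemma onbasis_extension (V : 'M[Cplx]_n) w r :
  (forall k, (k < r)%N -> (w k <= V)%MS) -> spanfam_free w r ->
  exists v, onbasis V v /\
    forall k, (k < r)%N ->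
      [/\ (k < \rank V)%N, (w k <= spanfam v k.+1)%MS & hdot (w k) (v k) != 0].
Proof.
move=> wV wfree; pose W := \matrix_(i < r) w i.
have Wfree : row_free W by rewrite /row_free eqmx_matrix_spanfam mxrank_spanfam_free.
have WV : (W <= V)%MS by rewrite eqmx_matrix_spanfam spanfam_sub.
have [Mfree eqMV] := row_free_col_mx_horth Wfree WV.
set M := col_mx _ _ in Mfree eqMV; set s := (r + _)%N in M Mfree eqMV.
have rankV : \rank V = s by rewrite -eqMV (eqP Mfree).
have eqSV : (schmidt M :=: V)%MS := eqmx_trans (eqmx_schmidt_free Mfree) eqMV.
have SON : orthonormal (rowfam (schmidt M)) s.
  by apply/orthonormal_rowfam/schmidt_unitarymx; rewrite -rankV rank_leq_col.
have w_span k : (k < r)%N -> (w k <= spanfam (rowfam (schmidt M)) k.+1)%MS.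
  move=> kr; have := row_schmidt_spanfam M (lshift _ (Ordinal kr)).
  by rewrite rowKu rowK.
exists (rowfam (schmidt M)); split.
  rewrite /onbasis rankV; split; last by rewrite eqmx_spanfam_rowfam eqSV.
  by move=> k ks; rewrite -eqSV -[k]/(val (Ordinal ks)) rowfamE row_sub.
move=> k kr; have ks : (k < s)%N by rewrite ltn_addr.
split; rewrite ?rankV ?w_span //; apply: contra (spanfam_free_triangular wfree w_span kr).
by move/eqP; apply: orthonormal_spanfam_recr SON ks (w_span k kr).
Qed.

Lemma exists_onbasis (V : 'M[Cplx]_n) : exists v, onbasis V v.
Proof.
have [|v [Vv _]] := @onbasis_extension V (fun=> 0) 0 (fun _ _ => sub0mx _ _); first by [].
by exists v.
Qed.

End Families.

Section Kernels.
Local Set Implicit Arguments.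
Local Unset Strict Implicit.
Variables (n : nat) (A : 'M[Cplx]_n).
Implicit Types (x : 'rV[Cplx]_n) (f g : nat -> 'rV[Cplx]_n).

Lemma KspaceS j : (Kspace A j <= Kspace A j.+1)%MS.
Proof. by rewrite /Kspace sub_kermx exprS -mulmxE trmx_mul mulmxA mulmx_ker mul0mx. Qed.

Lemma sub_Kspace_Lmap j x : (x <= Kspace A j.+1)%MS = (Lmap A x <= Kspace A j)%MS.
Proof. by rewrite /Kspace !sub_kermx /Lmap exprSr -mulmxE trmx_mul mulmxA. Qed.

Definition descentmx j := A^T *m proj_ortho (horth (Kspace A j)).

Lemma Lmap_descent_compl j x : (Lmap A x - x *m descentmx j <= Kspace A j)%MS.
Proof. by rewrite /descentmx mulmxA; apply: proj_horth_compl_sub. Qed.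

Lemma descent_Uspace j x :
  (x <= Kspace A j.+2)%MS -> (x *m descentmx j <= Uspace A j.+1)%MS.
Proof.
rewrite sub_Kspace_Lmap => LxK; rewrite sub_capmx; apply/andP; split; last first.
  by rewrite /descentmx mulmxA proj_ortho_sub.
have -> : x *m descentmx j = Lmap A x - (Lmap A x - x *m descentmx j) by rewrite subKr.
rewrite addmx_sub ?eqmx_opp //.
exact: submx_trans (Lmap_descent_compl j x) (KspaceS j).
Qed.

Lemma descent_inj j x :
  (x <= Uspace A j.+2)%MS -> x *m descentmx j = 0 -> x = 0.
Proof.
rewrite sub_capmx => /andP[_ xperp] x0; apply/eqP; rewrite -submx0.
rewrite -(orthomx_ortho_disj (Kspace A j.+1)) sub_capmx xperp andbT.
by have := Lmap_descent_compl j x; rewrite x0 subr0 -sub_Kspace_Lmap.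
Qed.

Definition Lmap_link j f g :=
  forall k, (k < \rank (Uspace A j))%N ->
    [/\ (k < \rank (Uspace A j.-1))%N,
         (spanfam g k.+1 <= horth (Kspace A (j - 2)))%MS,
         (Lmap A (f k) <= addsmx (spanfam g k.+1) (Kspace A (j - 2)))%MS
       & hdot (Lmap A (f k)) (g k) != 0].

Lemma onbasis_descent j f :
  onbasis (Uspace A j.+2) f ->
  exists g, onbasis (Uspace A j.+1) g /\ Lmap_link j.+2 f g.
Proof.
case=> fU [_ fON]; set r := \rank _ in fU fON.
pose w k := f k *m descentmx j.
have wU k : (k < r)%N -> (w k <= Uspace A j.+1)%MS.
  by move/fU/submx_trans/(_ (capmxSl _ _)); apply: descent_Uspace.
have wfree : spanfam_free w r.
  exact: spanfam_free_mulmx (@descent_inj j) fU (orthonormal_free fON).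
have [g [[gU gbasis] gw]] := onbasis_extension wU wfree.
exists g; split; first by split.
move=> k kr; have [ks w_span wg] := gw k kr; rewrite subn2.
have gperp l : (l < \rank (Uspace A j.+1))%N -> (g l <= horth (Kspace A j))%MS.
  by move/gU/submx_trans; apply; apply: capmxSr.
have Lf_split : Lmap A (f k) = w k + (Lmap A (f k) - w k) by rewrite addrC subrK.
split; first exact: ks.
- by apply: spanfam_sub => l lk; apply/gperp/(leq_ltn_trans _ ks).
- by rewrite Lf_split addmx_sub_adds // Lmap_descent_compl.
- by rewrite Lf_split hdotDl (hdot_horth (Lmap_descent_compl _ _) (gperp k ks)) addr0.
Qed.

Lemma onbasis_chain m d :
  (d < m)%N ->
  exists u : nat -> nat -> 'rV[Cplx]_n,
    (forall j, (m - d <= j <= m)%N -> onbasis (Uspace A j) (u j)) /\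
    (forall j, (m - d < j <= m)%N -> Lmap_link j (u j) (u j.-1)).
Proof.
elim: d => [|d IHd] dm.
  have [f fbasis] := exists_onbasis (Uspace A m).
  by exists (fun=> f); split=> j jm; [have -> : j = m by lia | lia].
have [u [ubasis ulink]] := IHd (ltnW dm).
have [i mdi] : exists i, (m - d = i.+2)%N by exists (m - d - 2)%N; lia.
have [g [gbasis glink]] := onbasis_descent (ubasis i.+2 ltac:(lia)).
exists (fun j => if j == i.+1 then g else u j); split=> j jm.
  by case: eqP => [-> //|ne]; apply: ubasis; lia.
rewrite ifN_eq; last by lia.
have [->|ne] := eqVneq j i.+2; first by rewrite eqxx.
by rewrite ifN_eq; [apply: ulink | ]; lia.
Qed.

End Kernels.

(* u j k  (k = 0, ..., r_j - 1) stands for the paper's u^j_{k+1}. *)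
Theorem proposition4 (n m : nat) (A : 'M[Cplx]_n) :
  (2 <= m)%N -> A ^+ m = 0 -> A ^+ m.-1 != 0 ->
  exists u : nat -> nat -> 'rV[Cplx]_n,
    (forall j, (1 <= j <= m)%N ->
       let r := \rank (Uspace A j) in
       (forall k, (k < r)%N -> (u j k <= Uspace A j)%MS) /\
       (Uspace A j <= spanfam (u j) r)%MS /\
       (forall k l, (k < r)%N -> (l < r)%N ->
          hdot (u j k) (u j l) = (k == l)%:R)) /\
    (forall j, (2 <= j <= m)%N ->
       forall k, (k < \rank (Uspace A j))%N ->
         [/\ (k < \rank (Uspace A j.-1))%N,
             (spanfam (u j.-1) k.+1 <= horth (Kspace A (j - 2)%N))%MS,
             (Lmap A (u j k) <= addsmx (spanfam (u j.-1) k.+1) (Kspace A (j - 2)%N))%MS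
           & hdot (Lmap A (u j k)) (u j.-1 k) != 0]).
Proof.
move=> m2 _ _.
have [u [ubasis ulink]] := @onbasis_chain n A m m.-1 ltac:(lia).
by exists u; split=> j jm; [apply: ubasis | apply: ulink]; lia.
Qed.
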